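(* $H\mathfrak P'=H\mathcal P=\mathcal P\setminus\{(1,0,1)\}$, where for a set $X$ of matrices and a set $Y$ of triples, $XY=\{M(x,y,z)^t:M\in X,\ (x,y,z)\in Y\}$.
   Context: Let $\mathfrak P=\{(x,y,z)\in\mathbb Z_{>0}^3: 2\mid y,\ \gcd(x,y,z)=1,\ x^2+y^2=z^2\}$ (primitive Pythagorean triples), $\mathfrak P'=\mathfrak P\cup\{(1,0,1)\}$, and $\mathcal P=\{(x,y,z)\in\mathfrak P:\min\{x,y\}<z/2\}\cup\{(1,0,1)\}$. Let $A=\begin{pmatrix}1&-2&2\\2&-1&2\\2&-2&3\end{pmatrix}$, $B=\begin{pmatrix}1&2&2\\2&1&2\\2&2&3\end{pmatrix}$, $C=\begin{pmatrix}-1&2&2\\-2&1&2\\-2&2&3\end{pmatrix}$, and let $G$ be the monoid generated by $I_3,A,B,C$ under matrix multiplication, acting on triples as column vectors. Let $H$ be the set of all matrices of the forms $A^2NB$, $A^kB$, $ABNB$, $C^2NB$, $C^kB$, $CBNB$, $(AC)^kA^2NB$, $(AC)^kABNB$, $(AC)^kAB$, $(CA)^kC^2NB$, $(CA)^kCBNB$, $(CA)^kCB$, with $N\in G$ and $k\in\mathbb Z_{>0}$. *)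

From HB Require Import structures.
From mathcomp Require Import all_boot all_order all_algebra.
Set Implicit Arguments. Unset Strict Implicit. Unset Printing Implicit Defensive.
Import Order.TTheory GRing.Theory Num.Theory.
Local Open Scope ring_scope.

Definition triple := (int * int * int)%type.

Definition colv (t : triple) : 'cV[int]_3 :=
  \col_(i < 3) nth 0 [:: t.1.1; t.1.2; t.2] i.

Definition mx3 (a b c d e f g h k : int) : 'M[int]_3 :=
  \matrix_(i < 3, j < 3)
     nth 0 (nth [::] [:: [:: a; b; c]; [:: d; e; f]; [:: g; h; k]] i) j.

Definition mA : 'M[int]_3 := mx3 1 (-2) 2  2 (-1) 2  2 (-2) 3.
Definition mB : 'M[int]_3 := mx3 1 2 2  2 1 2  2 2 3.
Definition mC : 'M[int]_3 := mx3 (-1) 2 2  (-2) 1 2  (-2) 2 3.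

Definition PPT (t : triple) : Prop :=
  let: (x, y, z) := t in
  0 < x /\ 0 < y /\ 0 < z /\ (2 %| y)%Z /\
  gcdz (gcdz x y) z = 1 /\ x ^+ 2 + y ^+ 2 = z ^+ 2.

Definition t101 : triple := (1, 0, 1).

Definition PPT' (t : triple) : Prop := PPT t \/ t = t101.

(* calligraphic P : min{x,y} < z/2, written 2*min{x,y} < z *)
Definition Pcal (t : triple) : Prop :=
  (PPT t /\ 2 * Num.min t.1.1 t.1.2 < t.2) \/ t = t101.

Inductive inG : 'M[int]_3 -> Prop :=
  | inG1 : inG 1
  | inGA N : inG N -> inG (mA * N)
  | inGB N : inG N -> inG (mB * N)
  | inGC N : inG N -> inG (mC * N).

Inductive inH : 'M[int]_3 -> Prop :=
  | H1 N : inG N -> inH (mA ^+ 2 * N * mB)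
  | H2 k : (0 < k)%N -> inH (mA ^+ k * mB)
  | H3 N : inG N -> inH (mA * mB * N * mB)
  | H4 N : inG N -> inH (mC ^+ 2 * N * mB)
  | H5 k : (0 < k)%N -> inH (mC ^+ k * mB)
  | H6 N : inG N -> inH (mC * mB * N * mB)
  | H7 N k : inG N -> (0 < k)%N -> inH ((mA * mC) ^+ k * mA ^+ 2 * N * mB)
  | H8 N k : inG N -> (0 < k)%N -> inH ((mA * mC) ^+ k * mA * mB * N * mB)
  | H9 k : (0 < k)%N -> inH ((mA * mC) ^+ k * mA * mB)
  | H10 N k : inG N -> (0 < k)%N -> inH ((mC * mA) ^+ k * mC ^+ 2 * N * mB)
  | H11 N k : inG N -> (0 < k)%N -> inH ((mC * mA) ^+ k * mC * mB * N * mB)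
  | H12 k : (0 < k)%N -> inH ((mC * mA) ^+ k * mC * mB).

Definition actset (X : 'M[int]_3 -> Prop) (Y : triple -> Prop) (t : triple) : Prop :=
  exists M, X M /\ exists s, Y s /\ colv t = M *m colv s.

From mathcomp Require Import all_boot all_order all_algebra zify.
Set Implicit Arguments. Unset Strict Implicit. Unset Printing Implicit Defensive.
Import Order.TTheory GRing.Theory Num.Theory.
Local Open Scope ring_scope.

(* The proof follows the Berggren tree.
   - Matrices act on triples through [mapt]; primitivity (gcd = 1) passes
     from the image of an integer linear map to its preimage (gcd3_preimage).
   - A, B, C preserve primitive triples; conversely the parent map
     |B^-1 t| sends every primitive triple t other than (3,4,5) to a
     primitive triple with a smaller hypotenuse of which t is an A-, B- or
     C-image (parent_spec).  Hence every primitive triple is N (3,4,5) with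
     N in G, and (3,4,5) = B (1,0,1).
   - The condition 2 min{x,y} < z splits into x < z/2 (the A-side) and
     y < z/2 (the C-side).  Both sides are handled at once in section
     OneSide, for a side S led by a matrix P with "other" matrix Q: the
     members of H beginning with P are exactly the matrices (PQ)^k M0 with
     M0 in a small family [core], they map frak P' into S, and every
     primitive triple in S is such an image of (1,0,1).
   - The theorem follows since H is the union of the two sides. *)

Definition trp (v : 'cV[int]_3) : triple :=
  (v ord0 ord0, v (inord 1) ord0, v (inord 2) ord0).

Definition mapt (M : 'M[int]_3) (t : triple) : triple := trp (M *m colv t).

Lemma colvK t : trp (colv t) = t.
Proof. by case: t => [[x y] z]; rewrite /trp /colv !mxE !inordK. Qed.

Lemma trpK v : colv (trp v) = v.
Proof.
apply/matrixP => i j; rewrite !mxE (ord1 j).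
by case: i => [[|[|[|i]]] hi] //=; congr (v _ _); apply: val_inj; rewrite /= ?inordK.
Qed.

Lemma mapt_mul M N t : mapt (M * N) t = mapt M (mapt N t).
Proof. by rewrite /mapt trpK -mulmxE mulmxA. Qed.

Lemma mapt1 t : mapt 1 t = t.
Proof. by rewrite /mapt mul1mx colvK. Qed.

Lemma mapt_mx3 a b c d e f g h k x y z :
  mapt (mx3 a b c d e f g h k) (x, y, z) =
  (a * x + b * y + c * z, d * x + e * y + f * z, g * x + h * y + k * z).
Proof.
rewrite /mapt /trp /colv /mx3 !mxE !big_ord_recr !big_ord0 /= !mxE !inordK //=.
by rewrite !add0r.
Qed.

Definition gcd3 (t : triple) : int := gcdz (gcdz t.1.1 t.1.2) t.2.

Lemma dvdz_gcd3 d t :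
  (d %| gcd3 t)%Z = [&& (d %| t.1.1)%Z, (d %| t.1.2)%Z & (d %| t.2)%Z].
Proof. by rewrite /gcd3 !dvdz_gcd andbA. Qed.

Lemma gcd3_mapt M t : (gcd3 t %| gcd3 (mapt M t))%Z.
Proof.
have /and3P[dx dy dz] :
    [&& (gcd3 t %| t.1.1)%Z, (gcd3 t %| t.1.2)%Z & (gcd3 t %| t.2)%Z].
  by rewrite -dvdz_gcd3.
have dv j : (gcd3 t %| colv t j ord0)%Z by rewrite mxE; case: j => [[|[|[|j]]] ?].
have dM i : (gcd3 t %| (M *m colv t) i ord0)%Z.
  by rewrite mxE; apply: rpred_sum => j _; apply/dvdz_mull/dv.
by rewrite dvdz_gcd3 /mapt /trp /= !dM.
Qed.

Lemma gcd3_preimage M s : gcd3 (mapt M s) = 1 -> gcd3 s = 1.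
Proof. by move=> h; have := gcd3_mapt M s; rewrite h dvdz1 /gcd3 /gcdz /= => /eqP ->. Qed.

Definition absv (t : triple) : triple := (`|t.1.1|, `|t.1.2|, `|t.2|).

Lemma gcd3_absv t : gcd3 (absv t) = gcd3 t.
Proof. by rewrite /gcd3 /gcdz /=. Qed.

Lemma gcd3_scaled t k a b c :
  t = (k * a, k * b, k * c) -> gcd3 t = 1 -> 0 < k -> k = 1.
Proof.
move=> -> h hk.
have : (k %| gcd3 (k * a, k * b, k * c))%Z.
  by rewrite dvdz_gcd3; apply/and3P; split; apply: dvdz_mulr.
by rewrite h dvdz1 => /eqP; lia.
Qed.

Definition berggren (X : 'M[int]_3) : Prop := [\/ X = mA, X = mB | X = mC].

Lemma berggrenA : berggren mA. Proof. exact: Or31. Qed.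
Lemma berggrenB : berggren mB. Proof. exact: Or32. Qed.
Lemma berggrenC : berggren mC. Proof. exact: Or33. Qed.

Definition mBi : 'M[int]_3 := mx3 1 2 (-2) 2 1 (-2) (-2) (-2) 3.

Definition parent (t : triple) : triple := absv (mapt mBi t).

(* The parent map undoes each Berggren move on positive triples
   (A = B diag(1,-1,1) and C = B diag(-1,1,1)). *)
Lemma parent_mapt X x y z : berggren X -> 0 < x -> 0 < y -> 0 < z ->
  parent (mapt X (x, y, z)) = (x, y, z).
Proof.
case=> -> hx hy hz; rewrite /mA /mB /mC mapt_mx3 /parent /mBi mapt_mx3 /absv /=;
  congr (_, _, _); lia.
Qed.

Lemma PPT_mapt X s : berggren X -> PPT s -> PPT (mapt X s).
Proof.
case: s => [[x y] z] hX [hx [hy [hz [h2 [hg he]]]]].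
have hg' : gcd3 (mapt X (x, y, z)) = 1.
  apply: (@gcd3_preimage mBi); rewrite -gcd3_absv.
  by have := parent_mapt hX hx hy hz; rewrite /parent => ->.
by case: hX hg' => ->; rewrite /mA /mB /mC mapt_mx3 => hg';
  do 5?split => //; nia.
Qed.

(* The second coordinate of B^-1 t vanishes only at (3,4,5) ... *)
Lemma mBi_y0_is_345 x y z : PPT (x, y, z) -> 2 * x + y = 2 * z -> (x, y, z) = (3, 4, 5).
Proof.
move=> [hx [hy [hz [h2 [hg he]]]]] hV.
have e35 : 3 * z = 5 * x by nia.
have [k ek] : exists k, (x, y, z) = (k * 3, k * 4, k * 5).
  by exists (x %/ 3)%Z; congr (_, _, _); lia.
have k1 : k = 1 by apply: (gcd3_scaled ek hg); case: ek; lia.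
by rewrite ek k1.
Qed.

(* ... and the first one never vanishes, since (4,3,5) has y odd. *)
Lemma mBi_x_neq0 x y z : PPT (x, y, z) -> x + 2 * y = 2 * z -> False.
Proof.
move=> [hx [hy [hz [h2 [hg he]]]]] hU.
have e35 : 3 * z = 5 * y by nia.
have [k ek] : exists k, (x, y, z) = (k * 4, k * 3, k * 5).
  by exists (y %/ 3)%Z; congr (_, _, _); lia.
have k1 : k = 1 by apply: (gcd3_scaled ek hg); case: ek; lia.
by case: ek => _ ey _; move: h2; rewrite ey k1.
Qed.

(* Elementary bounds for a Pythagorean triple of positive integers; the last
   one says that the parent has a positive hypotenuse. *)
Lemma pyth_bounds (x y z : int) : 0 < x -> 0 < y -> 0 < z ->
  x ^+ 2 + y ^+ 2 = z ^+ 2 ->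
  [/\ x < z, y < z, z < x + y & 2 * (x + y) < 3 * z].
Proof.
move=> hx hy hz he; have : 0 <= (x - y) ^+ 2 by apply: sqr_ge0.
by split; nia.
Qed.

Lemma parent_child x y z :
  0 < x -> 0 < y -> 0 < z -> x ^+ 2 + y ^+ 2 = z ^+ 2 ->
  x + 2 * y - 2 * z != 0 -> 2 * x + y - 2 * z != 0 ->
  exists2 X, berggren X & (x, y, z) = mapt X (parent (x, y, z)).
Proof.
move=> hx hy hz he hU hV; have [_ _ _ hW] := pyth_bounds hx hy hz he.
rewrite /parent /mBi mapt_mx3 /absv /=.
have [hU'|hU'] : 0 < x + 2 * y - 2 * z \/ x + 2 * y - 2 * z < 0 by lia.
all: have [hV'|hV'] : 0 < 2 * x + y - 2 * z \/ 2 * x + y - 2 * z < 0 by lia.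
- by exists mB; [exact: berggrenB | rewrite /mB mapt_mx3; congr (_, _, _); lia].
- by exists mA; [exact: berggrenA | rewrite /mA mapt_mx3; congr (_, _, _); lia].
- by exists mC; [exact: berggrenC | rewrite /mC mapt_mx3; congr (_, _, _); lia].
- nia.
Qed.

Lemma parent_spec t : PPT t -> t <> (3, 4, 5) ->
  [/\ PPT (parent t), (parent t).2 < t.2 &
      exists2 X, berggren X & t = mapt X (parent t)].
Proof.
case: t => [[x y] z] H hne; have [hx [hy [hz [h2 [hg he]]]]] := H.
have hU : x + 2 * y - 2 * z != 0 by apply/eqP => e; apply: (mBi_x_neq0 H); lia.
have hV : 2 * x + y - 2 * z != 0 by apply/eqP => e; apply/hne/(mBi_y0_is_345 H); lia.
have [X hX eX] := parent_child hx hy hz he hU hV.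
have hgp : gcd3 (parent (x, y, z)) = 1 by apply: (@gcd3_preimage X); rewrite -eX.
have [_ _ hsum hW] := pyth_bounds hx hy hz he.
split; last by exists X.
- move: hgp; rewrite /parent /mBi mapt_mx3 /absv /= => hgp.
  by do 5?split => //; lia.
- by rewrite /parent /mBi mapt_mx3 /absv /=; lia.
Qed.

Lemma inG_mul M N : inG M -> inG N -> inG (M * N).
Proof.
elim=> [|P _ IH|P _ IH|P _ IH] hN; first by rewrite mul1r.
all: by rewrite -mulrA; constructor; apply: IH.
Qed.

Lemma inG_berggren X N : berggren X -> inG N -> inG (X * N).
Proof. by case=> ->; constructor. Qed.

Lemma inG_of_berggren X : berggren X -> inG X.
Proof. by move=> hX; rewrite -[X]mulr1; apply: inG_berggren hX inG1. Qed.

Lemma inG_exp M k : inG M -> inG (M ^+ k).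
Proof.
move=> hM; elim: k => [|k IH]; first by rewrite expr0; constructor.
by rewrite exprS; apply: inG_mul.
Qed.

Lemma inG_PPT N s : inG N -> PPT s -> PPT (mapt N s).
Proof.
elim=> [|P _ IH|P _ IH|P _ IH] hs; rewrite ?mapt1 ?mapt_mul //.
- exact: PPT_mapt berggrenA (IH hs).
- exact: PPT_mapt berggrenB (IH hs).
- exact: PPT_mapt berggrenC (IH hs).
Qed.

Lemma PPT_gt0 t : PPT t -> 0 < t.2.
Proof. by case: t => [[x y] z] [_ [_ []]]. Qed.

Lemma PPT_ind (R : triple -> Prop) :
  (forall t, PPT t -> (forall s, PPT s -> s.2 < t.2 -> R s) -> R t) ->
  forall t, PPT t -> R t.
Proof.
move=> step t; have [n] := ubnP (absz t.2); elim: n t => // n IH t ht Ht.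
apply: (step t Ht) => s Hs lt; apply: (IH s _ Hs).
by have := PPT_gt0 Hs; have := PPT_gt0 Ht; lia.
Qed.

Lemma PPT_from_345 t : PPT t -> exists2 N, inG N & t = mapt N (3, 4, 5).
Proof.
move: t; apply: PPT_ind => t Ht IH.
have [->|/eqP ne] := eqVneq t (3, 4, 5); first by exists 1; [constructor | rewrite mapt1].
have [Hp lt [X hX eX]] := parent_spec Ht ne.
have [N hN eN] := IH _ Hp lt.
by exists (X * N); [apply: inG_berggren | rewrite mapt_mul -eN].
Qed.

Lemma mB_t101 : mapt mB t101 = (3, 4, 5).
Proof. by rewrite /mB /t101 mapt_mx3. Qed.

Lemma PPT_345 : PPT (3, 4, 5).
Proof. by do 5?split. Qed.

Lemma PPT'_mB s : PPT' s -> PPT (mapt mB s).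
Proof.
by case=> [hs | ->]; [apply: PPT_mapt berggrenB hs | rewrite mB_t101; apply: PPT_345].
Qed.

Definition x_small (t : triple) : Prop := 2 * t.1.1 < t.2.
Definition y_small (t : triple) : Prop := 2 * t.1.2 < t.2.

Record side (P Q : 'M[int]_3) (S : triple -> Prop) : Prop := Side {
  side_cover : forall X, berggren X -> [\/ X = P, X = mB | X = Q];
  side_P : berggren P;
  side_Q : berggren Q;
  side_PP : forall t, PPT t -> S (mapt P (mapt P t));
  side_PB : forall t, PPT' t -> S (mapt P (mapt mB t));
  side_PQ : forall t, S (mapt P (mapt Q t)) <-> S t;
  side_345 : ~ S (3, 4, 5);
  side_notB : forall t, PPT t -> ~ S (mapt mB t);
  side_notQ : forall t, PPT t -> ~ S (mapt Q t)
}.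

Lemma x_small_side : side mA mC x_small.
Proof.
split; rewrite /x_small.
- by [].
- exact: berggrenA.
- exact: berggrenC.
- by case=> [[x y] z] [hx [hy [hz _]]]; rewrite /mA !mapt_mx3 /=; lia.
- by case=> [[x y] z] [[hx [hy [hz _]]]|[= -> -> ->]]; rewrite /mA /mB !mapt_mx3 /=; lia.
- by case=> [[x y] z]; rewrite /mA /mC !mapt_mx3 /=; lia.
- by [].
- by case=> [[x y] z] [hx [hy [hz _]]]; rewrite /mB !mapt_mx3 /=; lia.
- by case=> [[x y] z] [hx [hy [hz _]]]; rewrite /mC !mapt_mx3 /=; lia.
Qed.

Lemma y_small_side : side mC mA y_small.
Proof.
split; rewrite /y_small.
- by move=> X [] ->; [apply: Or33 | apply: Or32 | apply: Or31].
- exact: berggrenC.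
- exact: berggrenA.
- by case=> [[x y] z] [hx [hy [hz _]]]; rewrite /mC !mapt_mx3 /=; lia.
- by case=> [[x y] z] [[hx [hy [hz _]]]|[= -> -> ->]]; rewrite /mC /mB !mapt_mx3 /=; lia.
- by case=> [[x y] z]; rewrite /mA /mC !mapt_mx3 /=; lia.
- by [].
- by case=> [[x y] z] [hx [hy [hz _]]]; rewrite /mB !mapt_mx3 /=; lia.
- by case=> [[x y] z] [hx [hy [hz _]]]; rewrite /mA !mapt_mx3 /=; lia.
Qed.

Section OneSide.

Variables (P Q : 'M[int]_3) (S : triple -> Prop).
Hypothesis hS : side P Q S.

(* The members of H beginning with P are the matrices (PQ)^k M0 with M0 in
   [core]: P^2 N B, P^k B (k > 0) and P B N B, with N in G. *)
Inductive core : 'M[int]_3 -> Prop :=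
  | core_PPN N : inG N -> core (P ^+ 2 * N * mB)
  | core_Pk k : (0 < k)%N -> core (P ^+ k * mB)
  | core_PBN N : inG N -> core (P * mB * N * mB).

Definition branch (M : 'M[int]_3) : Prop :=
  exists k M0, core M0 /\ M = (P * Q) ^+ k * M0.

Lemma branch_of k M0 M : core M0 -> M = (P * Q) ^+ k * M0 -> branch M.
Proof. by move=> hM0 ->; exists k, M0. Qed.

Lemma core_branch M0 : core M0 -> branch M0.
Proof. by move=> hM0; apply: (branch_of (k := 0) hM0); rewrite expr0 mul1r. Qed.

Lemma inG_P : inG P. Proof. exact: inG_of_berggren (side_P hS). Qed.

Lemma core_inG_mB M0 : core M0 -> exists2 N, inG N & M0 = N * mB.
Proof.
case=> [N hN|k _|N hN].
- by exists (P ^+ 2 * N); first by apply: inG_mul (inG_exp 2 inG_P) hN.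
- by exists (P ^+ k); first exact: inG_exp inG_P.
- exists (P * (mB * N)); last by rewrite !mulrA.
  by apply: inG_mul inG_P (inG_mul (inG_of_berggren berggrenB) hN).
Qed.

Lemma core_forward M0 s : core M0 -> PPT' s ->
  PPT (mapt M0 s) /\ S (mapt M0 s).
Proof.
move=> hM0 hs; have hB := PPT'_mB hs; split.
  by have [N hN ->] := core_inG_mB hM0; rewrite mapt_mul; apply: inG_PPT.
case: hM0 => [N hN|[|[|k]] // _|N hN].
- by rewrite !mapt_mul; apply: (side_PP hS); apply: inG_PPT.
- by rewrite expr1 mapt_mul; apply: (side_PB hS).
- rewrite 2!exprS !mapt_mul; apply: (side_PP hS).
  exact: inG_PPT (inG_exp k inG_P) hB.
- by rewrite !mapt_mul; apply: (side_PB hS); left; apply: inG_PPT.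
Qed.

Lemma PQ_pow_forward k t : PPT t -> S t ->
  PPT (mapt ((P * Q) ^+ k) t) /\ S (mapt ((P * Q) ^+ k) t).
Proof.
move=> Ht St; elim: k => [|k [IHp IHs]]; first by rewrite expr0 mapt1.
rewrite exprS !mapt_mul (side_PQ hS); split => //.
exact: PPT_mapt (side_P hS) (PPT_mapt (side_Q hS) IHp).
Qed.

Lemma branch_forward M s : branch M -> PPT' s ->
  PPT (mapt M s) /\ S (mapt M s).
Proof.
move=> [k [M0 [hM0 ->]]] hs; have [H0 S0] := core_forward hM0 hs.
by rewrite mapt_mul; apply: PQ_pow_forward.
Qed.

Lemma parent_PBQ t : PPT t -> t <> (3, 4, 5) ->
  exists p, [/\ PPT p, p.2 < t.2 &
                [\/ t = mapt P p, t = mapt mB p | t = mapt Q p]].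
Proof.
move=> Ht ne; have [Hp lt [X hX eX]] := parent_spec Ht ne.
exists (parent t); split => //.
by case: (side_cover hS hX) eX => -> eX; [exact: Or31 | exact: Or32 | exact: Or33].
Qed.

Lemma parent_P t : PPT t -> S t ->
  exists p, [/\ PPT p, p.2 < t.2 & t = mapt P p].
Proof.
move=> Ht St; have ne : t <> (3, 4, 5) by move=> e; apply: (side_345 hS); rewrite -e.
have [p [Hp lt [e|e|e]]] := parent_PBQ Ht ne; first by exists p.
- by case: (side_notB hS Hp); rewrite -e.
- by case: (side_notQ hS Hp); rewrite -e.
Qed.

(* Every primitive triple on the side S is a branch image of (1,0,1): look
   two generations up; a Q-step leads back to S and to the induction. *)
Lemma branch_backward t : PPT t -> S t -> exists2 M, branch M & t = mapt M t101.
Proof.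
move: t; apply: PPT_ind => t Ht IH St.
have [p [Hp ltp et]] := parent_P Ht St; rewrite et.
have [->|/eqP ne] := eqVneq p (3, 4, 5).
  exists (P ^+ 1 * mB); last by rewrite expr1 mapt_mul mB_t101.
  by apply/core_branch/core_Pk.
have [q [Hq ltq [ep|ep|ep]]] := parent_PBQ Hp ne; rewrite ep.
- have [N hN ->] := PPT_from_345 Hq.
  exists (P ^+ 2 * N * mB); last by rewrite -mB_t101 !mapt_mul.
  exact/core_branch/core_PPN.
- have [N hN ->] := PPT_from_345 Hq.
  exists (P * mB * N * mB); last by rewrite -mB_t101 !mapt_mul.
  exact/core_branch/core_PBN.
- have Sq : S q by apply/(side_PQ hS); rewrite -ep -et.
  have [M [k [M0 [hM0 ->]]] ->] := IH q Hq (lt_trans ltq ltp) Sq.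
  exists ((P * Q) ^+ k.+1 * M0); last by rewrite exprS -!mulrA !mapt_mul.
  exact: branch_of hM0 _.
Qed.

End OneSide.

Lemma inH_branch M : inH M -> branch mA mC M \/ branch mC mA M.
Proof.
case=> [N hN|k hk|N hN|N hN|k hk|N hN|N k hN hk|N k hN hk|k hk|N k hN hk|N k hN hk|k hk].
- by left; apply/core_branch/core_PPN.
- by left; apply/core_branch/core_Pk.
- by left; apply/core_branch/core_PBN.
- by right; apply/core_branch/core_PPN.
- by right; apply/core_branch/core_Pk.
- by right; apply/core_branch/core_PBN.
- by left; apply: (branch_of (k := k) (core_PPN _ hN)); rewrite !mulrA.
- by left; apply: (branch_of (k := k) (core_PBN _ hN)); rewrite !mulrA.
- by left; apply: (branch_of (k := k) (@core_Pk _ 1 isT)); rewrite expr1 !mulrA.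
- by right; apply: (branch_of (k := k) (core_PPN _ hN)); rewrite !mulrA.
- by right; apply: (branch_of (k := k) (core_PBN _ hN)); rewrite !mulrA.
- by right; apply: (branch_of (k := k) (@core_Pk _ 1 isT)); rewrite expr1 !mulrA.
Qed.

Lemma branch_inH M : branch mA mC M \/ branch mC mA M -> inH M.
Proof.
have inG_A j : inG (mA ^+ j) by apply/inG_exp/inG_of_berggren/berggrenA.
have inG_C j : inG (mC ^+ j) by apply/inG_exp/inG_of_berggren/berggrenC.
have expS2 (X : 'M[int]_3) j : X ^+ j.+2 = X ^+ 2 * X ^+ j by rewrite -exprD.
case=> -[[|k] [M0 [hM0 ->]]]; rewrite ?expr0 ?mul1r;
  case: hM0 => [N hN|k' hk'|N hN].
- exact: H1.
- exact: H2.
- exact: H3.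
- by have := H7 hN (ltn0Sn k); rewrite !mulrA.
- case: k' hk' => [|[|j]] // _.
  + by have := H9 (ltn0Sn k); rewrite !mulrA.
  + by have := H7 (inG_A j) (ltn0Sn k); rewrite (expS2 _ j) !mulrA.
- by have := H8 hN (ltn0Sn k); rewrite !mulrA.
- exact: H4.
- exact: H5.
- exact: H6.
- by have := H10 hN (ltn0Sn k); rewrite !mulrA.
- case: k' hk' => [|[|j]] // _.
  + by have := H12 (ltn0Sn k); rewrite !mulrA.
  + by have := H10 (inG_C j) (ltn0Sn k); rewrite (expS2 _ j) !mulrA.
- by have := H11 hN (ltn0Sn k); rewrite !mulrA.
Qed.

Definition good (t : triple) : Prop := PPT t /\ (x_small t \/ y_small t).

Lemma inH_forward M s : inH M -> PPT' s -> good (mapt M s).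
Proof.
move=> /inH_branch [hM|hM] hs.
- by have [H Sx] := branch_forward x_small_side hM hs; split; [|left].
- by have [H Sy] := branch_forward y_small_side hM hs; split; [|right].
Qed.

Lemma good_backward t : good t -> exists2 M, inH M & t = mapt M t101.
Proof.
case=> Ht [St|St].
- have [M hM ->] := branch_backward x_small_side Ht St.
  by exists M => //; apply: branch_inH; left.
- have [M hM ->] := branch_backward y_small_side Ht St.
  by exists M => //; apply: branch_inH; right.
Qed.

Lemma Pcal_good t : Pcal t /\ t <> t101 <-> good t.
Proof.
case: t => [[x y] z]; rewrite /good /Pcal /x_small /y_small /=; split.
- by case=> -[[H hm] _|-> []] //; split => //; lia.
- move=> [H hxy]; split; first by left; split => //=; lia.
  by case=> _ ey _; case: H => _ [hy _]; lia.
Qed.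

Lemma actsetE (X : 'M[int]_3 -> Prop) (Y : triple -> Prop) t :
  actset X Y t <-> exists2 M, X M & exists2 s, Y s & t = mapt M s.
Proof.
rewrite /actset /mapt; split.
- by case=> M [hM [s [hs e]]]; exists M => //; exists s; rewrite // -e colvK.
- by case=> M hM [s hs e]; exists M; split => //; exists s; rewrite e trpK.
Qed.

Lemma actset_mono (X : 'M[int]_3 -> Prop) (Y Y' : triple -> Prop) t :
  (forall s, Y s -> Y' s) -> actset X Y t -> actset X Y' t.
Proof.
by move=> hY [M [hM [s [hs e]]]]; exists M; split => //; exists s; split => //; apply: hY.
Qed.

Theorem lemma2p1 :
  (forall t : triple, actset inH PPT' t <-> actset inH Pcal t) /\
  (forall t : triple, actset inH Pcal t <-> (Pcal t /\ t <> t101)).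
Proof.
have Pcal_PPT' s : Pcal s -> PPT' s by case=> [[]|]; [left | right].
have image_good t : actset inH PPT' t -> good t.
  by case/actsetE=> M hM [s hs ->]; apply: inH_forward.
have good_image t : good t -> actset inH Pcal t.
  move/good_backward=> [M hM ->]; apply/actsetE; exists M => //.
  by exists t101; [right|].
split=> t; split.
- by move/image_good/good_image.
- exact: actset_mono.
- by move/(actset_mono Pcal_PPT')/image_good/Pcal_good.
- by move/Pcal_good/good_image.
Qed.
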